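(* Let $X$ be a finite or countably infinite set and $\mathcal{S}=\langle x_1,\dots,x_n\rangle\in X^n$ a sample. For any constant $C>1$ and probability distributions $q,q'$ on $X$ such that $\frac1C q(x)\le q'(x)\le Cq(x)$ for all $x\in X$, the distinguisher $f:X\to[0,1]$ defined by $$f(x)=\frac{1}{2\log C}\log\frac{Cq(x)}{q'(x)}$$ has training advantage (relative to $q$ and $\mathcal{S}$) $$\hat\alpha(f)\ge\frac{\hat{L}(q;\mathcal{S})-\hat{L}(q';\mathcal{S})}{2\log C}.$$
   Context: The log-loss of a distribution $q$ on the sample is $\hat{L}(q;\mathcal{S})=-\frac{1}{n}\sum_{i=1}^n\log q(x_i)$. The empirical expectation is $\hat{\mathrm{E}}_{\mathcal{S}}[h(x)]=\frac1n\sum_{i=1}^n h(x_i)$. The training advantage of $f:X\to[0,1]$ relative to $q$ and $\mathcal{S}$ is $\hat\alpha(f)=\mathrm{E}_{x\sim q}[f(x)]-\hat{\mathrm{E}}_{\mathcal{S}}[f(x)]$. *)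

From HB Require Import structures.
From mathcomp Require Import all_boot all_order all_algebra.
From mathcomp Require Import all_classical all_reals all_analysis.
Set Implicit Arguments. Unset Strict Implicit. Unset Printing Implicit Defensive.
Import Order.TTheory GRing.Theory Num.Theory.
Local Open Scope classical_set_scope.
Local Open Scope ring_scope.

Section Defs.
Variables (R : realType) (X : countType).

Definition is_distribution (q : X -> R) : Prop :=
  (forall x, 0 <= q x) /\ (\esum_(x in [set: X]) (q x)%:E = 1)%E.

Definition expect (q : X -> R) (h : X -> R) : \bar R :=
  (\esum_(x in [set: X]) (q x * h x)%:E)%E.

Definition emp_expect (n : nat) (S : 'I_n -> X) (h : X -> R) : R :=
  n%:R^-1 * \sum_(i < n) h (S i).

Definition log_loss (n : nat) (S : 'I_n -> X) (q : X -> R) : R :=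
  - (n%:R^-1 * \sum_(i < n) ln (q (S i))).

Definition training_advantage (q : X -> R) (n : nat) (S : 'I_n -> X)
  (f : X -> R) : \bar R :=
  (expect q f - (emp_expect S f)%:E)%E.

Definition distinguisher (C : R) (q q' : X -> R) (x : X) : R :=
  (2 * ln C)^-1 * ln (C * q x / q' x).

End Defs.

From HB Require Import structures.
From mathcomp Require Import all_boot all_order all_algebra.
From mathcomp Require Import all_classical all_reals all_analysis.
From mathcomp Require Import lra.
Import Order.TTheory GRing.Theory Num.Theory.
Local Open Scope ring_scope.

(* Put [a = 1/(2 ln C)].  Where [q > 0] the distinguisher is
   [f = 1/2 + a (ln q - ln q')], and [q/C <= q' <= C q] says exactly that
   [0 <= f <= 1].  Gibbs' inequality in its pointwise form
   [q ln (q/q') >= q - q'] gives [E_q f = 1/2 + a KL(q || q') >= 1/2], while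
   the empirical mean of [f] on the sample is at most
   [1/2 + a (L(q';S) - L(q;S))]; subtracting the two bounds gives the claim. *)

Lemma subr_le_mul_ln_div {R : realType} (u v : R) :
  0 < u -> 0 < v -> u - v <= u * ln (u / v).
Proof.
move=> u_gt0 v_gt0.
have vu_gt0 : 0 < v / u by rewrite divr_gt0.
have ln_vu : ln (v / u) <= v / u - 1.
  by rewrite -[X in ln X](subrK 1) addrC le_ln1Dx //; lra.
have -> : ln (u / v) = - ln (v / u).
  by rewrite -lnV ?posrE // invf_div.
have : u * ln (v / u) <= v - u.
  have -> : v - u = u * (v / u - 1).
    by rewrite mulrBr mulr1 mulrCA divff ?gt_eqF ?mulr1.
  by rewrite ler_wpM2l // ltW.
rewrite mulrN; lra.
Qed.

Section LogRatio.
Context {R : realType} {C : R} (C_gt1 : 1 < C) {u v : R}.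
Hypotheses (u_ge0 : 0 <= u) (v_ge : C^-1 * u <= v) (v_le : v <= C * u).

Let C_gt0 : 0 < C. Proof. exact: lt_trans ltr01 C_gt1. Qed.
Let lnC_gt0 : 0 < ln C. Proof. exact: ln_gt0. Qed.

Let u_eq0_or_gt0 : (u == 0) || (0 < u). Proof. by rewrite -le0r. Qed.

(* Where [u = 0] also [v = 0], and then [ln 0 = 0] makes every log-ratio vanish. *)
Let u0_v0 : u = 0 -> v = 0.
Proof.
move=> u0; apply/eqP; rewrite eq_le.
by move: v_le v_ge; rewrite u0 !mulr0 => -> ->.
Qed.

Let v_gt0 : 0 < u -> 0 < v.
Proof. by move=> u_gt0; apply: lt_le_trans v_ge; rewrite mulr_gt0 ?invr_gt0. Qed.

Let ln_ratioE : 0 < u -> ln (C * u / v) = ln C + (ln u - ln v).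
Proof. by move=> u_gt0; rewrite ln_div ?lnM ?posrE ?mulr_gt0 ?v_gt0 // addrA. Qed.

Lemma ln_ratio_ge0_le : 0 <= ln (C * u / v) <= 2 * ln C.
Proof.
case/orP: u_eq0_or_gt0 => [/eqP u0|u_gt0].
  by rewrite u0 mulr0 mul0r ln0 // lexx mulr_ge0 ?ltW.
have v_pos := v_gt0 u_gt0.
rewrite ln_ge0 /=; last by rewrite ler_pdivlMr // mul1r.
rewrite mulr_natl -lnXn // ler_ln ?posrE ?exprn_gt0 ?divr_gt0 ?mulr_gt0 //.
rewrite ler_pdivrMr // expr2 -mulrA ler_pM2l //.
by rewrite -ler_pdivrMl // mulrC.
Qed.

Lemma ln_ratio_le : ln (C * u / v) <= ln C + (ln u - ln v).
Proof.
case/orP: u_eq0_or_gt0 => [/eqP u0|u_gt0]; last by rewrite ln_ratioE.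
by rewrite u0 (u0_v0 u0) mulr0 mul0r ln0 // subr0 addr0 ltW.
Qed.

Lemma mul_ln_ratio_ge : (ln C + 1) * u - v <= u * ln (C * u / v).
Proof.
case/orP: u_eq0_or_gt0 => [/eqP u0|u_gt0].
  by rewrite u0 (u0_v0 u0) !(mulr0, mul0r) subrr.
rewrite ln_ratioE // -ln_div ?posrE ?v_gt0 // mulrDr mulrDl mul1r mulrC -addrA lerD2l.
exact: subr_le_mul_ln_div (v_gt0 u_gt0).
Qed.

End LogRatio.

Lemma esumZl {R : realType} {T : choiceType} (I : set T) (c : R) (b : T -> \bar R) :
  0 < c -> (forall i, (0 <= b i)%E) ->
  (\esum_(i in I) (c%:E * b i) = c%:E * \esum_(i in I) b i)%E.
Proof.
move=> c0 b0; rewrite /esum -ereal_sup_pZl //; congr ereal_sup.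
apply/seteqP; split => x /=.
- case=> A hA <-; exists (\sum_(i \in A) b i)%E; first by exists A.
  by rewrite ge0_mule_fsumr.
- case=> y [A hA <-] <-; exists A => //.
  by rewrite ge0_mule_fsumr.
Qed.

Section Expectations.
Context {R : realType} {X : countType}.

Lemma expect_cst (q : X -> R) (c : R) :
  is_distribution q -> 0 < c -> expect q (fun=> c) = c%:E.
Proof.
move=> [q_ge0 q_sum1] c_gt0; rewrite /expect.
under eq_esum do rewrite EFinM muleC.
by rewrite esumZl ?q_sum1 ?mule1 // => x; rewrite lee_fin.
Qed.

Context {n : nat} (S : 'I_n -> X).

Lemma ler_emp_expect (f g : X -> R) :
  (forall x, f x <= g x) -> emp_expect S f <= emp_expect S g.
Proof. by move=> fg; rewrite ler_wpM2l ?invr_ge0 // ler_sum. Qed.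

Lemma emp_expectD (f g : X -> R) :
  emp_expect S (fun x => f x + g x) = emp_expect S f + emp_expect S g.
Proof. by rewrite /emp_expect big_split mulrDr. Qed.

Lemma emp_expectZ (k : R) (f : X -> R) :
  emp_expect S (fun x => k * f x) = k * emp_expect S f.
Proof. by rewrite /emp_expect -mulr_sumr mulrCA. Qed.

Lemma emp_expectB (f g : X -> R) :
  emp_expect S (fun x => f x - g x) = emp_expect S f - emp_expect S g.
Proof. by rewrite /emp_expect sumrB mulrBr. Qed.

(* [n%:R^-1 * n%:R] is [0], not [1], for the empty sample. *)
Lemma emp_expect_cst_le (c : R) : 0 <= c -> emp_expect S (fun=> c) <= c.
Proof.
move=> c_ge0; rewrite /emp_expect sumr_const card_ord -[c *+ n]mulr_natr mulrCA.
have [->|n_gt0] := posnP n; first by rewrite mulr0 mulr0.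
by rewrite mulVf ?pnatr_eq0 -?lt0n // mulr1.
Qed.

Lemma log_lossE (q : X -> R) : log_loss S q = - emp_expect S (fun x => ln (q x)).
Proof. by []. Qed.

End Expectations.

Section Distinguisher.
Context {R : realType} {X : countType} {C : R} {q q' : X -> R}.
Hypotheses (C_gt1 : 1 < C) (q_dist : is_distribution q) (q'_dist : is_distribution q').
Hypothesis q'_close : forall x, C^-1 * q x <= q' x <= C * q x.

Let f := distinguisher C q q'.
Let a := (2 * ln C)^-1.

Let lnC_gt0 : 0 < ln C. Proof. exact: ln_gt0. Qed.

Let a_gt0 : 0 < a. Proof. by rewrite invr_gt0 mulr_gt0. Qed.

Let a_lnC : a * ln C = 2^-1.
Proof. by rewrite /a invfM -mulrA mulVf ?mulr1 // gt_eqF. Qed.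

Let q_ge0 x : 0 <= q x. Proof. by case: q_dist. Qed.
Let q'_ge0 x : 0 <= q' x. Proof. by case: q'_dist. Qed.

Lemma distinguisher_ge0_le1 x : 0 <= f x <= 1.
Proof.
have /andP[lo hi] := q'_close x.
have /andP[L0 L1] := ln_ratio_ge0_le C_gt1 (q_ge0 x) lo hi.
rewrite /f /distinguisher; apply/andP; split.
  by rewrite mulr_ge0 // invr_ge0 mulr_ge0 // ltW.
by rewrite mulrC ler_pdivrMr ?mul1r ?mulr_gt0.
Qed.

Lemma distinguisher_le x : f x <= 2^-1 + a * (ln (q x) - ln (q' x)).
Proof.
have /andP[lo hi] := q'_close x.
rewrite /f /distinguisher -/a -a_lnC -mulrDr ler_pM2l //.
by have := ln_ratio_le C_gt1 (q_ge0 x) lo hi.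
Qed.

Lemma expect_distinguisher_ge : ((2^-1)%:E <= expect q f)%E.
Proof.
have qf_ge0 x : 0 <= q x * f x.
  by rewrite mulr_ge0 ?q_ge0 //; case/andP: (distinguisher_ge0_le1 x).
have q'a_ge0 x : 0 <= q' x * a := mulr_ge0 (q'_ge0 x) (ltW a_gt0).
have : (expect q (fun=> a * (ln C + 1))%R <= expect q f + expect q' (fun=> a))%E.
  rewrite /expect -esumD => [|x _|x _]; rewrite ?lee_fin ?qf_ge0 ?q'a_ge0 //.
  apply: le_esum => x _; rewrite -EFinD lee_fin.
  have /andP[lo hi] := q'_close x.
  have := mul_ln_ratio_ge C_gt1 (q_ge0 x) lo hi.
  rewrite /f /distinguisher -/a => /(ler_wpM2l (ltW a_gt0)); lra.
rewrite !expect_cst ?mulr_gt0 ?addr_gt0 // -leeBlDr // -EFinB.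
by apply: le_trans; rewrite lee_fin mulrDr mulr1 a_lnC addrK.
Qed.

Lemma emp_expect_distinguisher_le {n} (S : 'I_n -> X) :
  emp_expect S f <= 2^-1 + a * (log_loss S q' - log_loss S q).
Proof.
apply: le_trans (ler_emp_expect S _ _ distinguisher_le) _.
rewrite emp_expectD emp_expectZ emp_expectB !log_lossE opprK [- _ + _]addrC lerD2r.
exact: emp_expect_cst_le.
Qed.

End Distinguisher.

Theorem lemma2 (R : realType) (X : countType) (n : nat) (S : 'I_n -> X)
  (C : R) (q q' : X -> R) :
  1 < C ->
  is_distribution q -> is_distribution q' ->
  (forall x, C^-1 * q x <= q' x <= C * q x) ->
  (forall x, 0 <= distinguisher C q q' x <= 1) /\
  (training_advantage q S (distinguisher C q q') >=
     ((log_loss S q - log_loss S q') / (2 * ln C))%:E)%E.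
Proof.
move=> C_gt1 q_dist q'_dist q'_close.
split=> [x|]; first exact: distinguisher_ge0_le1.
have emp_le := emp_expect_distinguisher_le C_gt1 q_dist q'_close S.
rewrite -lee_fin in emp_le.
apply: le_trans (leeB (expect_distinguisher_ge C_gt1 q_dist q'_dist q'_close) emp_le).
rewrite -EFinB lee_fin; lra.
Qed.
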